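(* Let $T=T((v_1,k_1),\dots,(v_l,k_l);p)$ and $S=T((v_1,k_1),\dots,(v_l,k_l);q)$ be two trees of diameter 4. Then there exists a non-negative integer $r$ such that $\mathbb{G}(R)$, where $R=T((v_1,k_1),\dots,(v_l,k_l);r)$, is isomorphic to a finite index subgroup of $\mathbb{G}(S)$ and to a finite index subgroup of $\mathbb{G}(T)$. In particular, $\mathbb{G}(S)$ and $\mathbb{G}(T)$ are commensurable.
   Context: For a finite simplicial graph $\Gamma$, $\mathbb{G}(\Gamma)$ is the right-angled Artin group with generators the vertices of $\Gamma$ and relations $[u,v]=1$ for each edge. Two groups are commensurable if they have isomorphic finite index subgroups. Encoding of trees of diameter 4: in a finite tree of diameter 4 the middle vertex of any path of length 4 is the same vertex $c$, the center; leaves adjacent to $c$ are hair vertices; other neighbours of $c$ are pivots. $T((d_1,k_1),\dots,(d_l,k_l);q)$ is the tree of diameter 4 with exactly $q\ge0$ hair vertices and, for each $i$, exactly $k_i$ pivots adjacent to exactly $d_i$ leaves, where $l,d_i,k_i$ are positive integers, $d_1<\dots<d_l$, and either $l\ge2$ or ($l=1$ and $k_1\ge2$). *)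

From Stdlib Require List.
From mathcomp Require Import all_boot.
Set Implicit Arguments. Unset Strict Implicit. Unset Printing Implicit Defensive.

(* Given a vertex type V and a (symmetric) adjacency relation E, the RAAG  *)
(* G(V,E) is the quotient of the free monoid on letters (x, true) = x and  *)
(* (x, false) = x^-1 by the congruence generated by free cancellation      *)
(* x^e x^-e = 1 and commutation x^b y^c = y^c x^b for E x y.               *)

Definition word (V : Type) := list (V * bool).

Inductive raag_eq (V : Type) (E : V -> V -> Prop) : word V -> word V -> Prop :=
| re_refl w : raag_eq E w w
| re_sym u v : raag_eq E u v -> raag_eq E v u
| re_trans u v w : raag_eq E u v -> raag_eq E v w -> raag_eq E u w
| re_cancel (u v : word V) (x : V) (b : bool) :
    raag_eq E (u ++ (x, b) :: (x, ~~ b) :: v) (u ++ v)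
| re_comm (u v : word V) (x y : V) (b c : bool) :
    E x y -> raag_eq E (u ++ (x, b) :: (y, c) :: v) (u ++ (y, c) :: (x, b) :: v).

(* Group operations on words: product is concatenation, unit is [::]. *)

Definition fi_embedding (V1 V2 : Type) (E1 : V1 -> V1 -> Prop)
    (E2 : V2 -> V2 -> Prop) (phi : word V1 -> word V2) : Prop :=
  (forall u v, raag_eq E1 u v -> raag_eq E2 (phi u) (phi v)) /\
  (forall u v, raag_eq E2 (phi (u ++ v)) (phi u ++ phi v)) /\
  (forall u v, raag_eq E2 (phi u) (phi v) -> raag_eq E1 u v) /\
  (* image has finitely many left cosets *)
  (exists cs : list (word V2), forall w : word V2,
      exists c, List.In c cs /\ exists u, raag_eq E2 w (c ++ phi u)).

(* Trees of diameter 4: T((d_1,k_1),...,(d_l,k_l); q).                    *)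
(* The data (d_i,k_i) is a list s of pairs; q is the number of hairs.     *)
(* Vertices: the center, hairs h < q, pivots (i,j) with i < l, j < k_i,   *)
(* and leaves (i,j,m) with m < d_i attached to pivot (i,j).               *)

Inductive tvert :=
| TCenter
| THair of nat
| TPivot of nat & nat
| TLeaf of nat & nat & nat.

Definition tvalid (s : seq (nat * nat)) (q : nat) (v : tvert) : bool :=
  match v with
  | TCenter => true
  | THair h => h < q
  | TPivot i j => (i < size s) && (j < (nth (0, 0) s i).2)
  | TLeaf i j m => [&& i < size s, j < (nth (0, 0) s i).2 & m < (nth (0, 0) s i).1]
  end.

Definition tree_vertex (s : seq (nat * nat)) (q : nat) := {v : tvert | tvalid s q v}.

Definition tadj_raw (v w : tvert) : Prop :=
  match v, w with
  | TCenter, THair _ => True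
  | TCenter, TPivot _ _ => True
  | TPivot i j, TLeaf i' j' _ => i = i' /\ j = j'
  | _, _ => False
  end.

Definition tree_adj (s : seq (nat * nat)) (q : nat) (v w : tree_vertex s q) : Prop :=
  tadj_raw (proj1_sig v) (proj1_sig w) \/ tadj_raw (proj1_sig w) (proj1_sig v).

Definition diam4_data (s : seq (nat * nat)) : bool :=
  [&& all (fun dk => (0 < dk.1) && (0 < dk.2)) s,
      sorted ltn (map fst s) &
      (2 <= size s) || ((size s == 1) && (2 <= (nth (0, 0) s 0).2))].

From mathcomp Require Import all_boot zify.
Set Implicit Arguments. Unset Strict Implicit. Unset Printing Implicit Defensive.

(* Let m >= 1 be the number of pivots of T = T(...; p), z a fixed pivot and
   n >= 1. The kernel H of the map G(T) -> Z/nZ sending every pivot to 1 and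
   all other generators to 0 has index n, with transversal 1, z, ..., z^(n-1).
   Reidemeister-Schreier rewriting shows that H is the right-angled Artin group
   of T(...; r), r = n p + (m-1)(n-1): its hairs are the n p conjugates
   z^i h z^-i of the hairs h of T and the (m-1)(n-1) elements z^k P z^-(k+1)
   (P <> z a pivot, k < n-1), its pivots are the powers P^n, each carrying the
   leaves of P. Choosing n = p + m - 1 inside G(T(...; q)) and n = q + m - 1
   inside G(T(...; p)) yields the same r = p q + (m-1)(p+q+m-2). *)

Section RaagWords.
Variables (V : Type) (E : V -> V -> Prop).
Local Notation req := (raag_eq E).

Definition inv_letter (x : V * bool) := (x.1, ~~ x.2).
Definition word_inv (w : word V) : word V := rev (map inv_letter w).

Lemma word_inv_cat u v : word_inv (u ++ v) = word_inv v ++ word_inv u.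
Proof. by rewrite /word_inv map_cat rev_cat. Qed.

Lemma word_invK : involutive word_inv.
Proof.
move=> w; rewrite /word_inv map_rev revK -map_comp.
by elim: w => //= -[a b] w ->; rewrite /inv_letter /= negbK.
Qed.

Lemma word_inv_cons x w : word_inv (x :: w) = word_inv w ++ [:: inv_letter x].
Proof. by rewrite -cat1s word_inv_cat. Qed.

Lemma all_word_inv (f : V -> bool) w :
  all (fun y => f y.1) (word_inv w) = all (fun y => f y.1) w.
Proof. by rewrite /word_inv all_rev all_map. Qed.

Lemma req_catl w u v : req u v -> req (w ++ u) (w ++ v).
Proof.
elim=> {u v} [u|u v _ IH|u v x _ IH1 _ IH2|u v x b|u v x y b c Exy].
- exact: re_refl.
- exact: re_sym.
- exact: re_trans IH2.
- rewrite !catA; exact: re_cancel.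
- rewrite !catA; exact: re_comm.
Qed.

Lemma req_catr w u v : req u v -> req (u ++ w) (v ++ w).
Proof.
elim=> {u v} [u|u v _ IH|u v x _ IH1 _ IH2|u v x b|u v x y b c Exy].
- exact: re_refl.
- exact: re_sym.
- exact: re_trans IH2.
- rewrite -!catA /=; exact: re_cancel.
- rewrite -!catA /=; exact: re_comm.
Qed.

Lemma req_cat u u' v v' : req u u' -> req v v' -> req (u ++ v) (u' ++ v').
Proof. by move=> Hu Hv; apply: re_trans (req_catr _ Hu) (req_catl _ Hv). Qed.

Lemma req_mulwV w : req (w ++ word_inv w) [::].
Proof.
elim: w => [|[a b] w IH] /=; first exact: re_refl.
rewrite word_inv_cons catA.
apply: (re_trans (v := (a, b) :: [::] ++ [:: (a, ~~ b)])).
  by apply: (req_catl [:: (a, b)]); apply: req_catr.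
exact: (re_cancel E [::] [::] a b).
Qed.

Lemma req_mulVw w : req (word_inv w ++ w) [::].
Proof. by have := req_mulwV (word_inv w); rewrite word_invK. Qed.

Lemma req_cancel_r u w v : req (u ++ w ++ word_inv w ++ v) (u ++ v).
Proof. by apply: req_catl; rewrite catA -{2}(cat0s v); apply: req_catr; apply: req_mulwV. Qed.

Lemma req_cancel_l u w v : req (u ++ word_inv w ++ w ++ v) (u ++ v).
Proof. by apply: req_catl; rewrite catA -{2}(cat0s v); apply: req_catr; apply: req_mulVw. Qed.

Lemma req_transpose a b c d :
  req (a ++ b) (c ++ d) -> req (word_inv c ++ a) (d ++ word_inv b).
Proof.
move=> H.
apply: (re_trans (v := word_inv c ++ (a ++ b) ++ word_inv b)).
  by apply: re_sym; have := req_cancel_r (word_inv c ++ a) b [::]; rewrite !cats0 -!catA.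
apply: (re_trans (v := word_inv c ++ (c ++ d) ++ word_inv b)).
  by apply: req_catl; apply: req_catr.
by rewrite -catA; apply: (req_cancel_l [::]).
Qed.

Hypothesis E_sym : forall x y, E x y -> E y x.

Lemma req_word_inv u v : req u v -> req (word_inv u) (word_inv v).
Proof.
elim=> {u v} [u|u v _ IH|u v x _ IH1 _ IH2|u v x b|u v x y b c Exy].
- exact: re_refl.
- exact: re_sym.
- exact: re_trans IH2.
- rewrite !word_inv_cat !word_inv_cons -!catA /= /inv_letter /= negbK; exact: re_cancel.
- rewrite !word_inv_cat !word_inv_cons -!catA /=; apply: re_comm; exact: E_sym.
Qed.

End RaagWords.
Arguments req_mulwV {V E} w.
Arguments req_mulVw {V E} w.
Arguments req_cancel_r {V E} u w v.
Arguments req_cancel_l {V E} u w v.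

Lemma req_commute_letter (V : Type) (E : V -> V -> Prop) (f : V -> bool) x w :
  (forall v, f v -> E x.1 v) -> all (fun y => f y.1) w ->
  raag_eq E (x :: w) (w ++ [:: x]).
Proof.
move=> Hf; elim: w => [|[b c] w IH] /=; first by move=> _; exact: re_refl.
case/andP => fb Hw; apply: (re_trans (v := (b, c) :: x :: w)).
  by case: x Hf IH => a e Hf _; apply: (re_comm [::] w e c); apply: Hf.
by apply: (req_catl [:: (b, c)]); apply: IH.
Qed.

Lemma fi_embedding_of_retraction (V1 V2 : Type) (E1 : V1 -> V1 -> Prop)
    (E2 : V2 -> V2 -> Prop) (phi : word V1 -> word V2) (rho : word V2 -> word V1) :
  (forall u v, raag_eq E1 u v -> raag_eq E2 (phi u) (phi v)) ->
  (forall u v, phi (u ++ v) = phi u ++ phi v) ->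
  (forall u v, raag_eq E2 u v -> raag_eq E1 (rho u) (rho v)) ->
  (forall u, raag_eq E1 (rho (phi u)) u) ->
  (exists cs : list (word V2), forall w : word V2,
      exists c, List.In c cs /\ exists u, raag_eq E2 w (c ++ phi u)) ->
  fi_embedding E1 E2 phi.
Proof.
move=> phi_req phi_cat rho_req rhoK cosets; split=> //; split.
  by move=> u v; rewrite phi_cat; exact: re_refl.
split=> // u v Huv.
exact: re_trans (re_sym (rhoK u)) (re_trans (rho_req _ _ Huv) (rhoK v)).
Qed.

Section Restriction.
Variables (T : Type) (E : T -> T -> Prop) (P : pred T).
Local Notation sT := {x | P x}.

Definition restrict_rel (x y : sT) := E (val x) (val y).

Definition lift_word (w : word sT) : word T := map (fun y => (val y.1, y.2)) w.

Definition restrict_word (w : word T) : word sT :=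
  pmap (fun x => omap (fun y => (y, x.2)) (insub x.1)) w.

Lemma lift_word_cat u v : lift_word (u ++ v) = lift_word u ++ lift_word v.
Proof. exact: map_cat. Qed.

Lemma restrict_word_cat u v : restrict_word (u ++ v) = restrict_word u ++ restrict_word v.
Proof. exact: pmap_cat. Qed.

Lemma restrict_word_cons x w : restrict_word (x :: w) =
  if insub x.1 is Some y then (y, x.2) :: restrict_word w else restrict_word w.
Proof. by rewrite /restrict_word /=; case: insub. Qed.

Lemma lift_wordK : cancel lift_word restrict_word.
Proof.
by elim=> [|[y b] w IH] //; rewrite (restrict_word_cons (val y, b)) /= valK IH.
Qed.

Lemma lift_word_valid w : all (fun x => P x.1) (lift_word w).
Proof. by elim: w => [|[y b] w IH] //=; rewrite IH (valP y). Qed.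

Lemma req_lift_word u v :
  raag_eq restrict_rel u v -> raag_eq E (lift_word u) (lift_word v).
Proof.
elim=> {u v} [u|u v _ IH|u v x _ IH1 _ IH2|u v x b|u v x y b c Exy].
- exact: re_refl.
- exact: re_sym.
- exact: re_trans IH2.
- rewrite !lift_word_cat /=; exact: re_cancel.
- rewrite !lift_word_cat /=; exact: re_comm.
Qed.

Lemma req_restrict_word u v :
  raag_eq E u v -> raag_eq restrict_rel (restrict_word u) (restrict_word v).
Proof.
elim=> {u v} [u|u v _ IH|u v x _ IH1 _ IH2|u v x b|u v x y b c Exy].
- exact: re_refl.
- exact: re_sym.
- exact: re_trans IH2.
- rewrite !restrict_word_cat !restrict_word_cons /=.
  case: insubP => [y _ _|_] /=; last exact: re_refl.
  exact: re_cancel.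
- rewrite !restrict_word_cat !restrict_word_cons /=.
  case: insubP => [x' _ Ex|_]; case: insubP => [y' _ Ey|_] /=; try exact: re_refl.
  by apply: re_comm; rewrite /restrict_rel Ex Ey.
Qed.

End Restriction.

Definition tadj (v w : tvert) : Prop := tadj_raw v w \/ tadj_raw w v.
Local Notation treq := (raag_eq tadj).

Lemma tadj_sym v w : tadj v w -> tadj w v.
Proof. by case; [right|left]. Qed.

Definition center_nbr (v : tvert) :=
  match v with THair _ | TPivot _ _ => true | _ => false end.

Definition on_pivot a c (v : tvert) :=
  if v is TPivot a' c' then (a' == a) && (c' == c) else false.

Definition center_word (w : word tvert) := all (fun x => center_nbr x.1) w.

Lemma center_word_cat u v : center_word (u ++ v) = center_word u && center_word v.
Proof. exact: all_cat. Qed.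

Lemma center_word_cons x w : center_word (x :: w) = center_nbr x.1 && center_word w.
Proof. by []. Qed.

Lemma center_word_inv w : center_word (word_inv w) = center_word w.
Proof. exact: all_word_inv. Qed.

Lemma req_center_commute b w :
  center_word w -> treq ((TCenter, b) :: w) (w ++ [:: (TCenter, b)]).
Proof. by apply: req_commute_letter => -[] // *; left. Qed.

Lemma req_leaf_commute a c d b w : all (fun x => on_pivot a c x.1) w ->
  treq ((TLeaf a c d, b) :: w) (w ++ [:: (TLeaf a c d, b)]).
Proof.
by apply: req_commute_letter => -[] // a' c' /andP[/eqP -> /eqP ->]; right.
Qed.

Lemma nseqSr (T : Type) k (x : T) : nseq k.+1 x = nseq k x ++ [:: x].
Proof. by rewrite -addn1 nseqD. Qed.

Lemma In_map_mem (A : eqType) (T : Type) (f : A -> T) (xs : seq A) x :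
  x \in xs -> List.In (f x) (map f xs).
Proof. by elim: xs => //= y xs IH; rewrite in_cons => /orP[/eqP ->|/IH]; [left|right]. Qed.

Section IndexSubgroup.
Variables (s : seq (nat * nat)) (p n : nat).
Hypothesis n_gt0 : 0 < n.
Local Notation ks := (map snd s).
Local Notation m := (sumn ks).
Hypothesis m_gt0 : 0 < m.
Local Notation r := (n * p + m.-1 * n.-1).

Lemma tvalid_pivot q a c : tvalid s q (TPivot a c) = (a < size ks) && (c < nth 0 ks a).
Proof. by rewrite /= size_map; case: ltnP => //= Ha; rewrite (nth_map (0, 0)). Qed.

Definition z0 := TPivot (reshape_index ks 0) (reshape_offset ks 0).
Definition zpow k : word tvert := nseq k (z0, true).

Lemma z0_valid q : tvalid s q z0.
Proof. by rewrite tvalid_pivot reshape_indexP ?reshape_offsetP. Qed.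

Lemma flatten_index_eq0 a c : c < nth 0 ks a -> flatten_index ks a c = 0 ->
  a = reshape_index ks 0 /\ c = reshape_offset ks 0.
Proof. by move=> lt_c g0; rewrite -g0 flatten_indexKl ?flatten_indexKr. Qed.

(* The hair of T(...; r) standing for z0^k P z0^-(k+1), P = TPivot a c;
   there is none for P = z0, the pivot of flat index 0. *)
Definition shift_hair a c k : word tvert :=
  let g := flatten_index ks a c in
  if g == 0 then [::] else [:: (THair (n * p + k * m.-1 + g.-1), true)].

Fixpoint shift_prefix a c k : word tvert :=
  if k is k'.+1 then shift_prefix a c k' ++ shift_hair a c k' else [::].

(* z0^(n-1) P = (z0^0 P z0^-1 ... z0^(n-2) P z0^-(n-1))^-1 P^n, and the pivot
   P of T(...; r) stands for P^n. *)
Definition pivot_rewrite a c i : word tvert :=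
  if i < n.-1 then shift_hair a c i
  else word_inv (shift_prefix a c n.-1) ++ [:: (TPivot a c, true)].

Definition leaf_rewrite a c i (x : tvert * bool) : word tvert :=
  word_inv (shift_prefix a c i) ++ x :: shift_prefix a c i.

Definition succ_mod i := i.+1 %% n.
Definition pred_mod i := (i + n.-1) %% n.

(* Reidemeister-Schreier rewriting of a letter read from the coset z0^i
   (see zpow_letter); letters outside T(...; p) are dropped. *)
Definition rs_letter i (x : tvert * bool) : word tvert :=
  let (v, b) := x in
  if tvalid s p v then
    match v with
    | TCenter => [:: x]
    | THair h => [:: (THair (i * p + h), b)]
    | TPivot a c => if b then pivot_rewrite a c i else word_inv (pivot_rewrite a c (pred_mod i))
    | TLeaf a c _ => leaf_rewrite a c i x
    end
  else [::].

Definition rs_next i (x : tvert * bool) : nat :=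
  let (v, b) := x in
  if tvalid s p v then
    if v is TPivot _ _ then (if b then succ_mod i else pred_mod i) else i
  else i.

Fixpoint rs_word i (w : word tvert) : word tvert :=
  if w is x :: w' then rs_letter i x ++ rs_word (rs_next i x) w' else [::].

Fixpoint rs_state i (w : word tvert) : nat :=
  if w is x :: w' then rs_state (rs_next i x) w' else i.

Lemma succ_modE i : i < n -> succ_mod i = if i < n.-1 then i.+1 else 0.
Proof.
move=> lt_in; rewrite /succ_mod; case: ifP => [|/negbT]; rewrite -ltnS prednK //.
  by move=> ?; rewrite modn_small.
by rewrite -leqNgt => le_ni; rewrite (@anti_leq i.+1 n) ?lt_in // modnn.
Qed.

Lemma pred_mod_lt i : pred_mod i < n.
Proof. exact: ltn_pmod. Qed.

Lemma pred_succ_mod i : i < n -> pred_mod (succ_mod i) = i.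
Proof.
by move=> lt_in; rewrite /pred_mod /succ_mod modnDml addSnnS prednK // modnDr modn_small.
Qed.

Lemma succ_pred_mod i : i < n -> succ_mod (pred_mod i) = i.
Proof.
move=> lt_in; rewrite /pred_mod /succ_mod -addn1 modnDml -addnA addn1 prednK //.
by rewrite modnDr modn_small.
Qed.

Lemma rs_next_lt i x : i < n -> rs_next i x < n.
Proof.
case: x => v b lt_in /=; case: (tvalid s p v) => //.
by case: v => // a c; case: b; apply: ltn_pmod.
Qed.

Lemma rs_state_lt i w : i < n -> rs_state i w < n.
Proof. by elim: w i => [|x w IH] i lt_in //=; apply/IH/rs_next_lt. Qed.

Lemma rs_word_cat i u v : rs_word i (u ++ v) = rs_word i u ++ rs_word (rs_state i u) v.
Proof. by elim: u i => [|x u IH] i //=; rewrite IH catA. Qed.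

Lemma rs_state_cat i u v : rs_state i (u ++ v) = rs_state (rs_state i u) v.
Proof. by elim: u i => [|x u IH] i //=. Qed.

Lemma rs_word1 i x : rs_word i [:: x] = rs_letter i x.
Proof. exact: cats0. Qed.

Lemma rs_state1 i x : rs_state i [:: x] = rs_next i x.
Proof. by []. Qed.

Lemma rs_letter_inv i x : i < n ->
  rs_next (rs_next i x) (inv_letter x) = i /\
  rs_letter (rs_next i x) (inv_letter x) = word_inv (rs_letter i x).
Proof.
case: x => v b lt_in; rewrite /inv_letter /=.
case Hv: (tvalid s p v) => //; case: v Hv => [|h|a c|a c d] Hv //=; rewrite ?Hv.
- by case: b => /=; rewrite ?pred_succ_mod ?succ_pred_mod ?word_invK.
- by rewrite /leaf_rewrite word_inv_cat word_inv_cons word_invK -catA.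
Qed.

Lemma rs_word_inv i w : i < n ->
  rs_state (rs_state i w) (word_inv w) = i /\
  rs_word (rs_state i w) (word_inv w) = word_inv (rs_word i w).
Proof.
elim: w i => [|x w IH] i lt_in //.
have [IH1 IH2] := IH _ (rs_next_lt x lt_in).
have [L1 L2] := rs_letter_inv x lt_in.
rewrite -cat1s word_inv_cat.
have -> : word_inv [:: x] = [:: inv_letter x] by [].
rewrite !rs_state_cat !rs_word_cat !rs_state1 !rs_word1 IH1 IH2.
by rewrite L1 L2 word_inv_cat.
Qed.

Lemma center_word_shift_prefix a c k : center_word (shift_prefix a c k).
Proof.
by elim: k => //= k IH; rewrite center_word_cat IH /shift_hair; case: ifP.
Qed.

Lemma center_word_pivot_rewrite a c i : center_word (pivot_rewrite a c i).
Proof.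
rewrite /pivot_rewrite; case: ifP => _; first by rewrite /shift_hair; case: ifP.
by rewrite center_word_cat center_word_inv center_word_shift_prefix.
Qed.

Lemma leaf_rewrite_succ a c d b i : i < n ->
  let x := (TLeaf a c d, b) in
  treq (leaf_rewrite a c (succ_mod i) x)
       (word_inv (pivot_rewrite a c i) ++ leaf_rewrite a c i x ++ pivot_rewrite a c i).
Proof.
move=> lt_in x; rewrite /leaf_rewrite (succ_modE lt_in) /pivot_rewrite.
case: ifP => [_|le_i] /=; first by rewrite word_inv_cat -!catA; exact: re_refl.
have -> : i = n.-1 by apply/eqP; rewrite eqn_leq -ltnS prednK // lt_in leqNgt le_i.
rewrite word_inv_cat word_invK -!catA /=.
set pr := shift_prefix a c n.-1; set P := (TPivot a c, true).
apply: re_sym.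
apply: (re_trans
  (v := [:: inv_letter P] ++ pr ++ word_inv pr ++ [:: x] ++ pr ++ word_inv pr ++ [:: P])).
  exact: re_refl.
apply: (re_trans (req_cancel_r _ _ _)).
apply: (re_trans (req_cancel_r [:: inv_letter P; x] _ _)).
apply: (re_trans (v := [:: x; inv_letter P; P])).
  by apply: (@re_comm _ _ [::] [:: P] (TPivot a c) (TLeaf a c d)); left.
exact: (req_cancel_l [:: x] [:: P] [::]).
Qed.

Lemma rs_letter_comm x y i : tadj x.1 y.1 -> i < n ->
  rs_next (rs_next i x) y = rs_next (rs_next i y) x /\
  treq (rs_letter i x ++ rs_letter (rs_next i x) y)
       (rs_letter i y ++ rs_letter (rs_next i y) x).
Proof.
wlog adj_xy : x y / tadj_raw x.1 y.1.
  move=> IH adj lt_in; case: (adj) => [raw|raw]; first exact: IH.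
  have [S R] := IH y x raw (tadj_sym adj) lt_in.
  by split; [rewrite S | exact: re_sym].
move=> _ lt_in; case: x y adj_xy => v b [w c] adj_vw /=.
case Vv: (tvalid s p v); last by rewrite cats0; split; [|exact: re_refl].
case Vw: (tvalid s p w); last by rewrite cats0; split; [|exact: re_refl].
case: v w adj_vw Vv Vw => [|h|a a'|a a' d] [|h'|e e'|e e' d'] //= adj_vw Vv Vw;
  rewrite ?Vv ?Vw; split=> //.
- by apply: (@re_comm _ _ [::] [::] TCenter (THair (i * p + h'))); left.
- apply: req_center_commute.
  by case: c; rewrite ?center_word_inv center_word_pivot_rewrite.
- case: adj_vw => <- <-; case: b.
    apply: re_trans (req_catl _ (leaf_rewrite_succ a a' d' c lt_in)) _.
    by rewrite !catA -(cat0s (leaf_rewrite _ _ _ _)) -!catA; apply: (req_cancel_r [::]).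
  have := leaf_rewrite_succ a a' d' c (pred_mod_lt i); rewrite succ_pred_mod // => H.
  apply: re_sym; apply: re_trans (req_catr _ H) _.
  rewrite -!catA; have := req_cancel_r (word_inv (pivot_rewrite a a' (pred_mod i)) ++
    leaf_rewrite a a' (pred_mod i) (TLeaf a a' d', c)) (pivot_rewrite a a' (pred_mod i)) [::].
  by rewrite !cats0 -!catA.
Qed.

Lemma rs_word_req u v : treq u v -> forall i, i < n ->
  rs_state i u = rs_state i v /\ treq (rs_word i u) (rs_word i v).
Proof.
elim=> {u v} [u|u v _ IH|u v w _ IH1 _ IH2|u v x b|u v x y b c adj_xy] i lt_in.
- by split; [|exact: re_refl].
- by have [S R] := IH i lt_in; split; [|exact: re_sym].
- have [S1 R1] := IH1 i lt_in; have [S2 R2] := IH2 i lt_in.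
  by split; [rewrite S1 | exact: re_trans R2].
- rewrite !rs_state_cat !rs_word_cat.
  have [S R] := rs_letter_inv (x, b) (rs_state_lt u lt_in).
  rewrite /inv_letter /= in S R; rewrite /= S R; split=> //.
  by apply: req_catl; apply: (req_cancel_r [::]).
- rewrite !rs_state_cat !rs_word_cat.
  have [S R] := @rs_letter_comm (x, b) (y, c) _ adj_xy (rs_state_lt u lt_in).
  rewrite /= in S R *; rewrite S; split=> //.
  by apply: req_catl; rewrite !catA; apply: req_catr.
Qed.

(* Hair i p + h of T(...; r) is z0^i h z0^-i, hair n p + k (m-1) + (g-1) is
   the element of shift_hair for the pivot of flat index g. *)
Definition gen_image (v : tvert) : word tvert :=
  if tvalid s r v then
    match v with
    | THair t =>
        if t < n * p then zpow (t %/ p) ++ (THair (t %% p), true) :: word_inv (zpow (t %/ p))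
        else
          let t' := t - n * p in let g := (t' %% m.-1).+1 in
          zpow (t' %/ m.-1) ++ (TPivot (reshape_index ks g) (reshape_offset ks g), true)
            :: word_inv (zpow (t' %/ m.-1).+1)
    | TPivot _ _ => nseq n (v, true)
    | _ => [:: (v, true)]
    end
  else [::].

Definition letter_image (x : tvert * bool) : word tvert :=
  if x.2 then gen_image x.1 else word_inv (gen_image x.1).

Definition word_image (w : word tvert) : word tvert := flatten (map letter_image w).

Lemma word_image_cat u v : word_image (u ++ v) = word_image u ++ word_image v.
Proof. by rewrite /word_image map_cat flatten_cat. Qed.

Lemma word_image_cons x w : word_image (x :: w) = letter_image x ++ word_image w.
Proof. by []. Qed.

Lemma word_image1 x : word_image [:: x] = letter_image x.
Proof. exact: cats0. Qed.

Lemma letter_image_inv x : letter_image (inv_letter x) = word_inv (letter_image x).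
Proof. by case: x => v []; rewrite /letter_image /= ?word_invK. Qed.

Lemma word_image_inv w : word_image (word_inv w) = word_inv (word_image w).
Proof.
elim: w => [|x w IH] //.
by rewrite word_inv_cons word_image_cat IH -[x :: w]cat1s word_image_cat word_inv_cat
  !word_image1 letter_image_inv.
Qed.

Lemma center_word_zpow k : center_word (zpow k).
Proof. by rewrite /center_word all_nseq orbT. Qed.

Lemma center_word_gen_image v : center_nbr v -> center_word (gen_image v).
Proof.
case: v => // [t|a c] _; rewrite /gen_image; case: ifP => // _.
  by case: ifP => _; rewrite center_word_cat center_word_cons center_word_inv !center_word_zpow.
by rewrite /center_word all_nseq orbT.
Qed.

Lemma letter_image_comm x y : tadj x.1 y.1 ->
  treq (letter_image x ++ letter_image y) (letter_image y ++ letter_image x).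
Proof.
wlog adj_xy : x y / tadj_raw x.1 y.1.
  move=> IH adj; case: (adj) => raw; first exact: IH.
  by apply: re_sym; apply: IH raw (tadj_sym adj).
move=> _; case: x y adj_xy => v b [w c] /=.
have center_image e u : center_nbr u -> center_word (letter_image (u, e)).
  by move=> cu; rewrite /letter_image; case: e; rewrite ?center_word_inv center_word_gen_image.
case: v => [|h|a a'|a a' d] // adj.
  have -> : letter_image (TCenter, b) = if tvalid s r TCenter then [:: (TCenter, b)] else [::].
    by case: b.
  by apply: req_center_commute; apply: center_image; case: w adj.
case: w adj => // e e' d' [<- <-].
have -> : letter_image (TLeaf a a' d', c) =
    if tvalid s r (TLeaf a a' d') then [:: (TLeaf a a' d', c)] else [::].
  by case: c; rewrite /letter_image /gen_image /=; case: ifP.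
case: ifP => _; last by rewrite cats0; exact: re_refl.
apply: re_sym; apply: req_leaf_commute.
rewrite /letter_image /gen_image; case: b; rewrite ?all_word_inv; case: ifP => //= _;
  by rewrite all_nseq /= !eqxx orbT.
Qed.

Lemma word_image_req u v : treq u v -> treq (word_image u) (word_image v).
Proof.
elim=> {u v} [u|u v _ IH|u v w _ IH1 _ IH2|u v x b|u v x y b c adj_xy].
- exact: re_refl.
- exact: re_sym.
- exact: re_trans IH2.
- rewrite !word_image_cat; apply: req_catl.
  rewrite !word_image_cons -[(x, ~~ b)]/(inv_letter (x, b)) letter_image_inv.
  exact: (req_cancel_r [::]).
- rewrite !word_image_cat; apply: req_catl.
  by rewrite !word_image_cons !catA; apply: req_catr; apply: letter_image_comm.
Qed.

Lemma rs_letter_pivot i a c b : tvalid s p (TPivot a c) ->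
  rs_letter i (TPivot a c, b) =
    if b then pivot_rewrite a c i else word_inv (pivot_rewrite a c (pred_mod i)).
Proof. by move=> /= ->. Qed.

Lemma rs_next_pivot i a c b : tvalid s p (TPivot a c) ->
  rs_next i (TPivot a c, b) = if b then succ_mod i else pred_mod i.
Proof. by move=> /= ->. Qed.

Lemma rs_letter_hair i h b : h < p -> rs_letter i (THair h, b) = [:: (THair (i * p + h), b)].
Proof. by move=> lt_hp; rewrite /= lt_hp. Qed.

Lemma rs_next_hair i h b : rs_next i (THair h, b) = i.
Proof. by rewrite /=; case: ifP. Qed.

Lemma rs_letter_leaf i a c d b : tvalid s p (TLeaf a c d) ->
  rs_letter i (TLeaf a c d, b) = leaf_rewrite a c i (TLeaf a c d, b).
Proof. by move=> /= ->. Qed.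

Lemma rs_next_leaf i a c d b : rs_next i (TLeaf a c d, b) = i.
Proof. by rewrite /=; case: ifP. Qed.

Lemma shift_prefix_z0 k : shift_prefix (reshape_index ks 0) (reshape_offset ks 0) k = [::].
Proof. by elim: k => //= k ->; rewrite /shift_hair reshape_indexK. Qed.

Lemma rs_pivot_power a c k : tvalid s p (TPivot a c) -> k <= n.-1 ->
  rs_state 0 (nseq k (TPivot a c, true)) = k /\
  rs_word 0 (nseq k (TPivot a c, true)) = shift_prefix a c k.
Proof.
move=> Vac; elim: k => [|k IH] lt_kn //.
have [S R] := IH (ltnW lt_kn).
rewrite nseqSr rs_state_cat rs_word_cat S R rs_state1 rs_word1.
rewrite rs_next_pivot // rs_letter_pivot // /pivot_rewrite lt_kn /succ_mod modn_small //.
by rewrite -(prednK n_gt0) ltnS.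
Qed.

Lemma rs_zpow k : k <= n.-1 -> rs_state 0 (zpow k) = k /\ rs_word 0 (zpow k) = [::].
Proof.
move=> le_kn; have [S R] := rs_pivot_power (z0_valid p) le_kn.
by rewrite /zpow R shift_prefix_z0.
Qed.

Lemma rs_zpow_inv k : k <= n.-1 ->
  rs_state k (word_inv (zpow k)) = 0 /\ rs_word k (word_inv (zpow k)) = [::].
Proof.
move=> le_kn; have [S R] := rs_zpow le_kn.
by have [S' R'] := rs_word_inv (zpow k) n_gt0; rewrite S R in S' R'; rewrite S' R'.
Qed.

Lemma rs_conj_hair t : t < n * p ->
  let w := zpow (t %/ p) ++ (THair (t %% p), true) :: word_inv (zpow (t %/ p)) in
  rs_state 0 w = 0 /\ treq (rs_word 0 w) [:: (THair t, true)].
Proof.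
move=> lt_t w; have p_gt0 : 0 < p by case: (p) lt_t; rewrite ?muln0.
have le_i : t %/ p <= n.-1 by rewrite -ltnS prednK // ltn_divLR.
have [S1 R1] := rs_zpow le_i; have [S2 R2] := rs_zpow_inv le_i.
rewrite /w -cat1s !rs_state_cat !rs_word_cat S1 R1 rs_state1 rs_word1 rs_next_hair S2 R2.
by rewrite rs_letter_hair ?ltn_pmod // -divn_eq; split; [|exact: re_refl].
Qed.

Lemma rs_conj_pivot t : n * p <= t < r ->
  let t' := t - n * p in let g := (t' %% m.-1).+1 in
  let w := zpow (t' %/ m.-1) ++ (TPivot (reshape_index ks g) (reshape_offset ks g), true)
             :: word_inv (zpow (t' %/ m.-1).+1) in
  rs_state 0 w = 0 /\ treq (rs_word 0 w) [:: (THair t, true)].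
Proof.
case/andP=> le_t lt_t t' g w.
have lt_t' : t' < m.-1 * n.-1 by rewrite /t' ltn_subLR.
have m1_gt0 : 0 < m.-1 by case: (m.-1) lt_t'.
have lt_k : t' %/ m.-1 < n.-1 by rewrite ltn_divLR // mulnC.
have lt_g : g < m by rewrite -(prednK m_gt0) ltnS ltn_pmod.
have Vg : tvalid s p (TPivot (reshape_index ks g) (reshape_offset ks g)).
  by rewrite tvalid_pivot reshape_indexP ?reshape_offsetP.
have [S1 R1] := rs_zpow (ltnW lt_k); have [S2 R2] := rs_zpow_inv lt_k.
rewrite /w -cat1s !rs_state_cat !rs_word_cat S1 R1 rs_state1 rs_word1.
rewrite rs_next_pivot // rs_letter_pivot // /succ_mod modn_small; last first.
  by rewrite -(prednK n_gt0) ltnS.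
rewrite S2 R2 /pivot_rewrite lt_k /shift_hair reshape_indexK /=.
by rewrite -addnA -divn_eq subnKC //; split; [|exact: re_refl].
Qed.

Lemma rs_pivot_pow a c : tvalid s p (TPivot a c) ->
  rs_state 0 (nseq n (TPivot a c, true)) = 0 /\
  treq (rs_word 0 (nseq n (TPivot a c, true))) [:: (TPivot a c, true)].
Proof.
move=> Vac; have [S R] := rs_pivot_power Vac (leqnn n.-1).
rewrite -[in nseq n _](prednK n_gt0) nseqSr rs_state_cat rs_word_cat S R rs_state1 rs_word1.
rewrite rs_next_pivot // rs_letter_pivot // /pivot_rewrite ltnn /succ_mod prednK // modnn.
by split=> //; apply: (req_cancel_r [::]).
Qed.

Lemma rs_gen_image v : tvalid s r v ->
  rs_state 0 (gen_image v) = 0 /\ treq (rs_word 0 (gen_image v)) [:: (v, true)].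
Proof.
move=> Vv; rewrite /gen_image Vv.
case: v Vv => [|t|a c|a c d] Vv.
- by split; [|exact: re_refl].
- case: ifP => lt_t; first exact: rs_conj_hair.
  by apply: rs_conj_pivot; rewrite leqNgt lt_t.
- by apply: rs_pivot_pow; move: Vv; rewrite !tvalid_pivot.
- rewrite rs_state1 rs_word1 rs_next_leaf rs_letter_leaf //.
  by split; [|exact: re_refl].
Qed.

Lemma rs_word_image u : all (fun x => tvalid s r x.1) u ->
  rs_state 0 (word_image u) = 0 /\ treq (rs_word 0 (word_image u)) u.
Proof.
elim: u => [|[v b] u IH] /=; first by split; [|exact: re_refl].
case/andP => Vv Vu; have [S1 R1] := IH Vu.
have [S2 R2] : rs_state 0 (letter_image (v, b)) = 0 /\
               treq (rs_word 0 (letter_image (v, b))) [:: (v, b)].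
  have [S R] := rs_gen_image Vv; case: b; rewrite /letter_image //=.
  have [S' R'] := rs_word_inv (gen_image v) n_gt0; rewrite S in S' R'.
  by rewrite S' R'; split=> //; apply: (req_word_inv tadj_sym R).
rewrite word_image_cons rs_state_cat rs_word_cat S2 S1; split=> //.
by rewrite -cat1s; apply: req_cat.
Qed.

Lemma word_image_conj_hair i h b : i < n -> h < p ->
  word_image [:: (THair (i * p + h), b)] = zpow i ++ (THair h, b) :: word_inv (zpow i).
Proof.
move=> lt_in lt_hp; have p_gt0 : 0 < p by case: (p) lt_hp.
have lt_t : i * p + h < n * p.
  apply: (@leq_trans (i.+1 * p)); first by rewrite mulSn addnC ltn_add2r.
  by rewrite leq_mul2r lt_in orbT.
have Vt : tvalid s r (THair (i * p + h)) by rewrite /= (leq_trans lt_t) // leq_addr.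
rewrite word_image1 /letter_image /= /gen_image Vt lt_t divnMDl // (divn_small lt_hp) addn0.
rewrite modnMDl (modn_small lt_hp).
by case: b => //=; rewrite word_inv_cat word_inv_cons word_invK -catA.
Qed.

Lemma word_image_shift_hair a c k : tvalid s p (TPivot a c) ->
  flatten_index ks a c != 0 -> k < n.-1 ->
  word_image (shift_hair a c k) = zpow k ++ (TPivot a c, true) :: word_inv (zpow k.+1).
Proof.
rewrite tvalid_pivot => /andP[_ lt_c] g_neq0 lt_k.
set g := flatten_index ks a c in g_neq0 *.
have lt_g : g.-1 < m.-1.
  by rewrite -ltnS prednK ?lt0n // (leq_trans (flatten_indexP lt_c)) // -(prednK m_gt0).
have lt_t : k * m.-1 + g.-1 < m.-1 * n.-1.
  apply: (@leq_trans (k.+1 * m.-1)); first by rewrite mulSn addnC ltn_add2r.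
  by rewrite mulnC leq_mul2l lt_k orbT.
have Vt : tvalid s r (THair (n * p + k * m.-1 + g.-1)) by rewrite /= -addnA ltn_add2l.
have m1_gt0 : 0 < m.-1 by case: (m.-1) lt_g.
rewrite /shift_hair -/g (negbTE g_neq0) word_image1 /letter_image /= /gen_image Vt.
rewrite -addnA ltnNge leq_addr /= addKn divnMDl // (divn_small lt_g) addn0.
by rewrite modnMDl (modn_small lt_g) prednK ?lt0n // flatten_indexKl // flatten_indexKr.
Qed.

Lemma word_image_shift_prefix a c k : tvalid s p (TPivot a c) -> k <= n.-1 ->
  treq (word_image (shift_prefix a c k)) (nseq k (TPivot a c, true) ++ word_inv (zpow k)).
Proof.
move=> Vac; have [g0|g_neq0] := eqVneq (flatten_index ks a c) 0.
  move: Vac; rewrite tvalid_pivot => /andP[_ lt_c] _.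
  have [-> ->] := flatten_index_eq0 lt_c g0.
  by rewrite shift_prefix_z0; apply: re_sym; apply: (req_mulwV (zpow k)).
elim: k => [|k IH] lt_k; first exact: re_refl.
rewrite [shift_prefix _ _ k.+1]/= word_image_cat word_image_shift_hair //.
apply: re_trans (req_catr _ (IH (ltnW lt_k))) _.
by rewrite nseqSr -!catA; apply: req_catl; apply: (req_cancel_l [::]).
Qed.

Lemma word_image_pivot a c : tvalid s p (TPivot a c) ->
  word_image [:: (TPivot a c, true)] = nseq n (TPivot a c, true).
Proof. by rewrite word_image1 /letter_image /gen_image !tvalid_pivot => ->. Qed.

Lemma zpow_pivot a c i : tvalid s p (TPivot a c) -> i < n ->
  treq (zpow i ++ [:: (TPivot a c, true)])
       (word_image (pivot_rewrite a c i) ++ zpow (succ_mod i)).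
Proof.
move=> Vac lt_in; rewrite (succ_modE lt_in) /pivot_rewrite; case: ifP => lt_i.
  have [g0|g_neq0] := eqVneq (flatten_index ks a c) 0.
    move: Vac; rewrite tvalid_pivot => /andP[_ lt_c].
    have [-> ->] := flatten_index_eq0 lt_c g0.
    by rewrite /shift_hair reshape_indexK /zpow -nseqSr; exact: re_refl.
  rewrite word_image_shift_hair //; apply: re_sym.
  have := req_cancel_l (zpow i ++ [:: (TPivot a c, true)]) (zpow i.+1) [::].
  by rewrite !cats0 -!catA.
have -> : i = n.-1 by apply/eqP; rewrite eqn_leq -ltnS prednK // lt_in leqNgt lt_i.
rewrite word_image_cat word_image_inv word_image_pivot // cats0.
have := req_word_inv tadj_sym (word_image_shift_prefix Vac (leqnn n.-1)).
rewrite word_inv_cat word_invK => H; apply: re_sym; apply: re_trans (req_catr _ H) _.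
rewrite -[in nseq n _](prednK n_gt0) nseqSr -!catA; apply: req_catl.
exact: (req_cancel_l [::]).
Qed.

Lemma zpow_leaf a c d b i : tvalid s p (TLeaf a c d) -> i < n ->
  let x := (TLeaf a c d, b) in
  treq (zpow i ++ [:: x]) (word_image (leaf_rewrite a c i x) ++ zpow i).
Proof.
move=> Vx lt_in x.
have Vac : tvalid s p (TPivot a c) by move: Vx => /= /and3P[-> ->].
have le_i : i <= n.-1 by rewrite -ltnS prednK.
have image_x : word_image [:: x] = [:: x].
  by rewrite word_image1 /letter_image /gen_image /x; move: Vx => /= ->; case: (b).
have prefix_image := word_image_shift_prefix Vac le_i.
have prefix_inv_image := req_word_inv tadj_sym prefix_image.
rewrite word_inv_cat word_invK -word_image_inv in prefix_inv_image.
rewrite /leaf_rewrite -[x :: shift_prefix _ _ _]cat1s !word_image_cat image_x.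
set Q := nseq i (TPivot a c, true) in prefix_image prefix_inv_image *.
set Z := zpow i in prefix_image prefix_inv_image *.
apply: re_sym; apply: (re_trans (v := ((Z ++ word_inv Q) ++ [:: x] ++ (Q ++ word_inv Z)) ++ Z)).
  by apply: req_catr; apply: req_cat prefix_inv_image (req_catl _ prefix_image).
rewrite -!catA; apply: (re_trans (v := Z ++ word_inv Q ++ [:: x] ++ Q)).
  by have := req_cancel_l (Z ++ word_inv Q ++ [:: x] ++ Q) Z [::]; rewrite !cats0 -!catA.
apply: req_catl; apply: (re_trans (v := word_inv Q ++ Q ++ [:: x])).
  by apply: req_catl; apply: req_leaf_commute; rewrite all_nseq /= !eqxx orbT.
exact: (req_cancel_l [::] Q [:: x]).
Qed.

Lemma zpow_letter x i : tvalid s p x.1 -> i < n ->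
  treq (zpow i ++ [:: x]) (word_image (rs_letter i x) ++ zpow (rs_next i x)).
Proof.
case: x => v b; rewrite [(v, b).1]/= => Vx lt_in.
case: v Vx => [|h|a c|a c d] Vx.
- have -> : word_image [:: (TCenter, b)] = [:: (TCenter, b)] by case: b.
  by apply: re_sym; apply: req_center_commute; apply: center_word_zpow.
- rewrite rs_letter_hair // rs_next_hair word_image_conj_hair //; apply: re_sym.
  by have := req_cancel_l (zpow i ++ [:: (THair h, b)]) (zpow i) [::]; rewrite !cats0 -!catA.
- rewrite rs_letter_pivot // rs_next_pivot //; case: b; first exact: zpow_pivot.
  have := zpow_pivot Vx (pred_mod_lt i); rewrite succ_pred_mod // => /req_transpose H.
  by rewrite word_image_inv; apply: re_sym.
- by rewrite rs_letter_leaf // rs_next_leaf; apply: zpow_leaf.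
Qed.

Lemma zpow_word w i : all (fun x => tvalid s p x.1) w -> i < n ->
  treq (zpow i ++ w) (word_image (rs_word i w) ++ zpow (rs_state i w)).
Proof.
elim: w i => [|x w IH] i /=; first by move=> _ _; rewrite cats0; exact: re_refl.
case/andP => Vx Vw lt_in.
apply: (re_trans (v := (zpow i ++ [:: x]) ++ w)); first by rewrite -catA; exact: re_refl.
apply: re_trans (req_catr _ (zpow_letter Vx lt_in)) _.
by rewrite word_image_cat -!catA; apply: req_catl; apply/IH/rs_next_lt.
Qed.

Lemma rs_restrict_word w i :
  rs_state i (lift_word (restrict_word (tvalid s p) w)) = rs_state i w /\
  rs_word i (lift_word (restrict_word (tvalid s p) w)) = rs_word i w.
Proof.
elim: w i => [|[v b] w IH] i //; rewrite restrict_word_cons /=.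
case: insubP => [y Vv <-|/negbTE Vv] /=; first by have [-> ->] := IH (rs_next i (val y, b)).
by rewrite Vv; apply: IH.
Qed.

Lemma word_image_restrict_word w :
  word_image (lift_word (restrict_word (tvalid s r) w)) = word_image w.
Proof.
elim: w => [|[v b] w IH] //; rewrite restrict_word_cons /=.
case: insubP => [y _ <-|/negbTE Vv]; first by rewrite /= !word_image_cons IH.
by rewrite word_image_cons IH /letter_image /gen_image Vv; case: b.
Qed.

Lemma tree_fi_embedding : exists phi : word (tree_vertex s r) -> word (tree_vertex s p),
  fi_embedding (@tree_adj s r) (@tree_adj s p) phi.
Proof.
pose lift q := @lift_word _ (tvalid s q); pose restrict q := restrict_word (tvalid s q).
exists (fun u => restrict p (word_image (lift r u))).
apply: (@fi_embedding_of_retraction _ _ _ _ _ (fun w => restrict r (rs_word 0 (lift p w)))).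
- by move=> u v /req_lift_word/word_image_req/(req_restrict_word (tvalid s p)).
- by move=> u v; rewrite /lift /restrict lift_word_cat word_image_cat restrict_word_cat.
- move=> u v /req_lift_word/rs_word_req H.
  exact: (req_restrict_word (tvalid s r) (H 0 n_gt0).2).
- move=> u; have [_ ->] := rs_restrict_word (word_image (lift r u)) 0.
  have [_ H] := rs_word_image (lift_word_valid u).
  by have := req_restrict_word (tvalid s r) H; rewrite lift_wordK.
exists [seq restrict p (word_inv (zpow k)) | k <- iota 0 n] => w.
set w1 := word_inv (lift p w).
have Vw1 : all (fun x => tvalid s p x.1) w1 by rewrite all_word_inv lift_word_valid.
have := req_word_inv tadj_sym (zpow_word Vw1 n_gt0).
rewrite !word_inv_cat [word_inv (zpow 0)]/= cats0 {1}/w1 word_invK -word_image_inv.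
rewrite -(word_image_restrict_word (word_inv _)).
move/(req_restrict_word (tvalid s p)); rewrite lift_wordK restrict_word_cat => H.
exists (restrict p (word_inv (zpow (rs_state 0 w1)))); split; last by eexists; exact: H.
by apply: In_map_mem; rewrite mem_iota add0n rs_state_lt.
Qed.

End IndexSubgroup.

Lemma diam4_data_pivots s : diam4_data s -> 1 < sumn (map snd s).
Proof.
case: s => [|[d1 k1] [|[d2 k2] s]] /and3P[pos_s _ size_s] //=.
  by rewrite addn0.
by case/and3P: pos_s => /andP[_ /= k1_gt0] /andP[_ /= k2_gt0] _; lia.
Qed.

Theorem mainTheorem7 (s : seq (nat * nat)) (p q : nat) :
  diam4_data s ->
  exists r : nat,
    (exists phi : word (tree_vertex s r) -> word (tree_vertex s q),
        fi_embedding (@tree_adj s r) (@tree_adj s q) phi) /\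
    (exists psi : word (tree_vertex s r) -> word (tree_vertex s p),
        fi_embedding (@tree_adj s r) (@tree_adj s p) psi).
Proof.
move/diam4_data_pivots; set m := sumn _ => m_gt1.
have m_gt0 : 0 < m by apply: ltnW.
have index_gt0 k : 0 < k + m.-1 by lia.
have r_sym : (p + m.-1) * q + m.-1 * (p + m.-1).-1 = (q + m.-1) * p + m.-1 * (q + m.-1).-1.
  by nia.
exists ((p + m.-1) * q + m.-1 * (p + m.-1).-1); split.
  exact: tree_fi_embedding (index_gt0 p) m_gt0.
by rewrite r_sym; exact: tree_fi_embedding (index_gt0 q) m_gt0.
Qed.
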